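(* Let $G_1$ and $G_2$ be connected $k$-regular graphs with $|V(G_1)|=|V(G_2)|=n$ and $Z(G_1)\neq Z(G_2)$. Let $m\geq n$, and let $G'=(G_1\vee P_m)\cup G_2$ and $G''=(G_2\vee P_m)\cup G_1$, where $\cup$ denotes disjoint union. Then $G'$ and $G''$ are nonisomorphic graphs that are cospectral with respect to the adjacency matrix, and $Z(G')\neq Z(G'')$.
   Context: Graphs are finite, simple, undirected. $P_m$ is the path on $m$ vertices. The join $G\vee H$ is the disjoint union of $G$ and $H$ together with all edges $\{u,v\}$, $u\in V(G)$, $v\in V(H)$. The zero forcing number $Z(G)$ is the minimum size of a set $S\subseteq V(G)$ such that, if the vertices of $S$ are colored blue and all others white, repeated application of the rule ''a blue vertex with exactly one white neighbor forces that neighbor to become blue'' eventually makes every vertex blue. *)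

From mathcomp Require Import all_boot all_order all_algebra.
From Stdlib Require Import ClassicalDescription.
Set Implicit Arguments. Unset Strict Implicit. Unset Printing Implicit Defensive.

Definition simple_graph (T : finType) (e : rel T) : Prop :=
  symmetric e /\ irreflexive e.

Definition connected_graph (T : finType) (e : rel T) : Prop :=
  forall x y : T, connect e x y.

Definition k_regular (T : finType) (e : rel T) (k : nat) : Prop :=
  forall x : T, #|[set y | e x y]| = k.

Definition path_rel (m : nat) : rel 'I_m :=
  fun i j => (i.+1 == j :> nat) || (j.+1 == i :> nat).

Definition join_rel (T U : finType) (e : rel T) (f : rel U) : rel (T + U)%type :=
  fun x y => match x, y with
             | inl a, inl b => e a b
             | inr a, inr b => f a b
             | _, _ => true
             end.

Definition dunion_rel (T U : finType) (e : rel T) (f : rel U) : rel (T + U)%type :=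
  fun x y => match x, y with
             | inl a, inl b => e a b
             | inr a, inr b => f a b
             | _, _ => false
             end.

Definition isomorphic (T U : finType) (e : rel T) (f : rel U) : Prop :=
  exists g : T -> U, bijective g /\ forall x y, f (g x) (g y) = e x y.

Definition adjacency (T : finType) (e : rel T) : 'M[int]_#|T| :=
  \matrix_(i, j) (e (enum_val i) (enum_val j))%:R%R.

Definition cospectral (T U : finType) (e : rel T) (f : rel U) : Prop :=
  char_poly (adjacency e) = char_poly (adjacency f).

(* Zero forcing.  A blue vertex u with exactly one white neighbour v forces v. *)
Definition valid_force (T : finType) (e : rel T) (B : {set T}) (u v : T) : bool :=
  [&& u \in B, e u v, v \notin B & [forall w, e u w ==> (w == v) || (w \in B)]].

Fixpoint forcing_chain (T : finType) (e : rel T) (B : {set T}) (s : seq T) : bool :=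
  match s with
  | [::] => B == setT
  | v :: s' => [exists u, valid_force e B u v] && forcing_chain e (v |: B) s'
  end.

Definition zero_forcing_set (T : finType) (e : rel T) (S : {set T}) : Prop :=
  exists s : seq T, forcing_chain e S s.

Definition zero_forcing_setb (T : finType) (e : rel T) (S : {set T}) : bool :=
  if excluded_middle_informative (zero_forcing_set e S) then true else false.

(* Z(G): minimum size of a zero forcing set (setT is one, so #|T| is a valid default) *)
Definition zero_forcing_number (T : finType) (e : rel T) : nat :=
  \big[minn/#|T|]_(S : {set T} | zero_forcing_setb e S) #|S|.

From HB Require Import structures.
From mathcomp Require Import all_boot all_order all_algebra fingroup perm ring.
From Stdlib Require Import ClassicalDescription.
Set Implicit Arguments. Unset Strict Implicit. Unset Printing Implicit Defensive.

(* Zero forcing is additive over disjoint unions.  If G has no isolated vertex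
   and |V(G)| <= m, then every vertex of G \/ P_m has degree at least
   |V(G)| + 1; since a first force u -> v needs u and all its neighbours but v
   to be blue, Z(G \/ P_m) >= |V(G)| + 1, and all of G plus one end of the path
   forces along the path.  Hence Z(G') - Z(G'') = Z(G_2) - Z(G_1) <> 0, which
   also excludes an isomorphism.
   For cospectrality, order both vertex sets as (G_1, P_m, G_2) and let v be
   1 on G_1, 0 on P_m, -1 on G_2, and w the indicator of P_m.  The adjacency
   matrices X, Y then differ by v w^T + w v^T, k-regularity gives
   v^T X = k v^T + n w^T and Y v = k v - n w, and Q = n I - v v^T, which is
   n times a reflection since v^T v = 2n, satisfies Q X = Y Q. *)

(* [minn] has no unit on [nat], so instead of [bigD1] we use [big_rem_AC],
   which only needs a commutative semigroup law. *)
HB.instance Definition _ := SemiGroup.isComLaw.Build nat minn minnA minnC.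

Section ZeroForcing.
Variables (T : finType) (e : rel T).

Lemma zero_forcing_setbP S : reflect (zero_forcing_set e S) (zero_forcing_setb e S).
Proof. by rewrite /zero_forcing_setb; case: excluded_middle_informative => ?; constructor. Qed.

Lemma zero_forcing_setT : zero_forcing_set e setT.
Proof. by exists [::]; rewrite /= eqxx. Qed.

Lemma zero_forcing_number_min S :
  zero_forcing_set e S -> zero_forcing_number e <= #|S|.
Proof.
move=> /zero_forcing_setbP zS.
by rewrite /zero_forcing_number (big_rem_AC _ _ _ _ (mem_index_enum S)) zS geq_minl.
Qed.

Lemma zero_forcing_numberP :
  exists2 S, zero_forcing_set e S & zero_forcing_number e = #|S|.
Proof.
apply: (big_ind (fun z => exists2 S, zero_forcing_set e S & z = #|S|)).
- by exists setT; rewrite ?cardsT //; apply: zero_forcing_setT.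
- by move=> _ _ [S1 zS1 ->] [S2 zS2 ->]; rewrite /minn; case: ltnP; eauto.
- by move=> S /zero_forcing_setbP; exists S.
Qed.

Lemma zero_forcing_number_le_card : zero_forcing_number e <= #|T|.
Proof. by rewrite -cardsT; apply/zero_forcing_number_min/zero_forcing_setT. Qed.

Fixpoint forcing_seq (B : {set T}) (s : seq T) : bool :=
  if s is v :: s' then [exists u, valid_force e B u v] && forcing_seq (v |: B) s'
  else true.

Lemma forcing_chainE B s :
  forcing_chain e B s = forcing_seq B s && (B :|: [set x in s] == setT).
Proof.
elim: s B => [|v s IHs] B /=.
  by congr (_ == _); apply/setP => x; rewrite !inE orbF.
rewrite IHs andbA; congr (_ && (_ == _)); apply/setP => x.
by rewrite !inE -orbA orbCA.
Qed.

Lemma forcing_seq_cat B s1 s2 :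
  forcing_seq B (s1 ++ s2) = forcing_seq B s1 && forcing_seq (B :|: [set x in s1]) s2.
Proof.
elim: s1 B => [|v s1 IHs] B /=.
  by congr forcing_seq; apply/setP => x; rewrite !inE orbF.
rewrite IHs andbA; congr (_ && forcing_seq _ _); apply/setP => x.
by rewrite !inE -orbA orbCA.
Qed.

Lemma zero_forcing_set_force B u v :
  valid_force e B u v -> zero_forcing_set e (v |: B) -> zero_forcing_set e B.
Proof. by move=> uv [s zs]; exists (v :: s); rewrite /= zs andbT; apply/existsP; exists u. Qed.

Lemma zero_forcing_set_first_force S : zero_forcing_set e S ->
  S = setT \/ exists u v, valid_force e S u v.
Proof.
case=> -[/eqP|v s /andP[/existsP[u uv] _]]; first by left.
by right; exists u, v.
Qed.

Lemma zero_forcing_number_gt0 : 0 < #|T| -> 0 < zero_forcing_number e.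
Proof.
move=> T_gt0; have [S zS ->] := zero_forcing_numberP.
case/zero_forcing_set_first_force: zS => [->|[u [v /and4P[uS _ _ _]]]].
  by rewrite cardsT.
by apply/card_gt0P; exists u.
Qed.

Lemma zero_forcing_number_small : #|T| <= 1 -> zero_forcing_number e = #|T|.
Proof.
move=> T_le1; apply/eqP; rewrite eqn_leq zero_forcing_number_le_card /=.
by case: #|T| T_le1 zero_forcing_number_gt0 => [|[|]] // _; apply.
Qed.

Lemma zero_forcing_number_ge_mindeg d : irreflexive e -> 0 < #|T| ->
  (forall x, d <= #|[set y | e x y]|) -> d <= zero_forcing_number e.
Proof.
move=> irr_e /card_gt0P[x0 _] deg_ge.
have [S zS ->] := zero_forcing_numberP.
case/zero_forcing_set_first_force: zS => [->|[u [v]]].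
  by rewrite cardsT (leq_trans (deg_ge x0)) ?max_card.
case/and4P=> uS euv vS /forallP u_saturated; apply: leq_trans (deg_ge u) _.
pose N := [set y | e u y].
have NuS : u |: (N :\ v) \subset S.
  apply/subsetP => w; rewrite !inE => /predU1P[-> //|/andP[wv euw]].
  by have := u_saturated w; rewrite euw (negbTE wv).
rewrite (leq_trans _ (subset_leq_card NuS)) // cardsU1 in_setD1 inE irr_e andbF.
by rewrite (cardsD1 v N) inE euv.
Qed.

End ZeroForcing.

Section Embedding.
Variables (T W : finType) (e : rel T) (d : rel W) (h : T -> W) (h' : W -> option T).
Hypotheses (hK : pcancel h h') (h'K : ocancel h' h).
Hypothesis d_h : forall x y, d (h x) (h y) = e x y.
Hypothesis h_closed : forall x w, d (h x) w -> h' w != None.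
Hypothesis h_coclosed : forall w x, d w (h x) -> h' w != None.

Let h_inj : injective h. Proof. exact: pcan_inj hK. Qed.

Let preimset_setU1 x (C : {set W}) : h @^-1: (h x |: C) = x |: h @^-1: C.
Proof. by apply/setP => y; rewrite !inE (inj_eq h_inj). Qed.

Lemma forcing_seq_map (B : {set T}) (C : {set W}) s :
  h @^-1: C = B -> forcing_seq e B s -> forcing_seq d C (map h s).
Proof.
elim: s B C => [|v s IHs] B C //= CB.
case/andP=> /existsP[u /and4P[uB euv vB /forallP u_sat]] forces.
apply/andP; split; last by apply: IHs forces; rewrite preimset_setU1 CB.
have inC y : (h y \in C) = (y \in B) by rewrite -CB inE.
apply/existsP; exists (h u); apply/and4P; split; rewrite ?d_h ?inC //.
apply/forallP => w; apply/implyP => duw.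
have := h_closed duw; case Ew: (h' w) => [y|] // _.
have hyw : h y = w by rewrite -(h'K w) Ew.
rewrite -hyw (inj_eq h_inj) inC; apply: (implyP (u_sat y)).
by rewrite -d_h hyw.
Qed.

Lemma forcing_seq_preimset (C : {set W}) s :
  forcing_seq d C s -> forcing_seq e (h @^-1: C) (pmap h' s).
Proof.
elim: s C => [|v s IHs] C //=.
case/andP=> /existsP[u /and4P[uC duv vC /forallP u_sat]] /IHs.
case Ev: (h' v) => [a|] /=; last first.
  congr forcing_seq; apply/setP => y; rewrite !inE.
  by case: eqP => // hyv; rewrite -hyv hK in Ev.
have hav : h a = v by rewrite -(h'K v) Ev.
subst v; rewrite preimset_setU1 => ->; rewrite andbT.
have := h_coclosed duv; case Eu: (h' u) => [c|] // _.
have hcu : h c = u by rewrite -(h'K u) Eu.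
subst u; apply/existsP; exists c; apply/and4P; split; rewrite ?inE -?d_h //.
apply/forallP => y; apply/implyP; rewrite -d_h => duy.
by rewrite -(inj_eq h_inj) inE; apply: (implyP (u_sat (h y))).
Qed.

Lemma zero_forcing_set_preimset (C : {set W}) :
  zero_forcing_set d C -> zero_forcing_set e (h @^-1: C).
Proof.
case=> s; rewrite forcing_chainE => /andP[/forcing_seq_preimset forces /eqP covered].
exists (pmap h' s); rewrite forcing_chainE forces; apply/eqP/setP => x.
have := covered; move/setP/(_ (h x)); rewrite !inE mem_pmap => /orP[-> //|hxs].
by rewrite -hK (map_f h' hxs) orbT.
Qed.

End Embedding.

Lemma zero_forcing_number_iso_le (T U : finType) (e : rel T) (f : rel U) (g : T -> U) :
  bijective g -> (forall x y, f (g x) (g y) = e x y) ->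
  zero_forcing_number e <= zero_forcing_number f.
Proof.
move=> g_bij f_g; have [g' gK g'K] := g_bij.
have [C zC ->] := zero_forcing_numberP f.
rewrite -(on_card_preimset (onW_bij _ g_bij)); apply: zero_forcing_number_min.
by apply: (zero_forcing_set_preimset (h' := Some \o g')) => // x; rewrite /= gK.
Qed.

Lemma zero_forcing_number_iso (T U : finType) (e : rel T) (f : rel U) :
  isomorphic e f -> zero_forcing_number e = zero_forcing_number f.
Proof.
case=> g [g_bij f_g]; have [g' gK g'K] := g_bij.
apply/eqP; rewrite eqn_leq (zero_forcing_number_iso_le g_bij f_g).
apply: (zero_forcing_number_iso_le (g := g')); first by exists g.
by move=> x y; rewrite -f_g !g'K.
Qed.

Definition oleft (T U : Type) (x : T + U) : option T :=
  if x is inl a then Some a else None.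
Definition oright (T U : Type) (x : T + U) : option U :=
  if x is inr b then Some b else None.

Lemma card_sum_preimset (T U : finType) (A : {set T + U}) :
  #|A| = #|inl @^-1: A| + #|inr @^-1: A|.
Proof.
rewrite -!sum1_card big_mkcond big_sumType /=.
by congr (_ + _); rewrite [RHS]big_mkcond; apply: eq_bigr => i _; rewrite inE.
Qed.

Section DisjointUnion.
Variables (T U : finType) (e : rel T) (f : rel U).
Local Notation D := (dunion_rel e f).

Lemma zero_forcing_number_dunion_ge :
  zero_forcing_number e + zero_forcing_number f <= zero_forcing_number D.
Proof.
have [C zC ->] := zero_forcing_numberP D.
rewrite card_sum_preimset leq_add // zero_forcing_number_min //.
  by apply: (zero_forcing_set_preimset (d := D) (h' := @oleft T U)) zC => // -[].
by apply: (zero_forcing_set_preimset (d := D) (h' := @oright T U)) zC => // -[].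
Qed.

Lemma zero_forcing_number_dunion_le :
  zero_forcing_number D <= zero_forcing_number e + zero_forcing_number f.
Proof.
have [S1 [s1 zs1] ->] := zero_forcing_numberP e.
have [S2 [s2 zs2] ->] := zero_forcing_numberP f.
move: zs1 zs2; rewrite !forcing_chainE => /andP[fs1 /eqP cover1] /andP[fs2 /eqP cover2].
pose S := [set x | match x with inl a => a \in S1 | inr b => b \in S2 end].
have inr_s1 (b : U) : (inr b : T + U) \in map inl s1 = false by apply/mapP => -[].
have inl_s2 (a : T) : (inl a : T + U) \in map inr s2 = false by apply/mapP => -[].
have [S_l S_r] : inl @^-1: S = S1 /\ inr @^-1: S = S2 by split; apply/setP => ?; rewrite !inE.
rewrite -{1}S_l -S_r -card_sum_preimset; apply: zero_forcing_number_min.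
exists (map inl s1 ++ map inr s2); rewrite forcing_chainE forcing_seq_cat -andbA.
apply/and3P; split.
- by apply: (forcing_seq_map (d := D) (h' := @oleft T U)) fs1 => // [[]|? []].
- apply: (forcing_seq_map (d := D) (h' := @oright T U)) fs2 => // [[]|? []|] //.
  by apply/setP => b; rewrite !inE inr_s1 orbF.
apply/eqP/setP => -[a|b]; rewrite !inE mem_cat.
  by rewrite (mem_map inl_inj) inl_s2 orbF; move/setP/(_ a): cover1; rewrite !inE.
rewrite (mem_map (@inr_inj _ _)) inr_s1.
by move/setP/(_ b): cover2; rewrite !inE.
Qed.

Lemma zero_forcing_number_dunion :
  zero_forcing_number D = zero_forcing_number e + zero_forcing_number f.
Proof.
by apply/eqP; rewrite eqn_leq zero_forcing_number_dunion_le zero_forcing_number_dunion_ge.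
Qed.

End DisjointUnion.

Section Join.
Variables (T U : finType) (e : rel T) (f : rel U).
Local Notation J := (join_rel e f).

Lemma join_irreflexive : irreflexive e -> irreflexive f -> irreflexive J.
Proof. by move=> irr_e irr_f [a|b] /=. Qed.

Lemma card_join_nbhd_inl a : #|[set y | J (inl a) y]| = #|[set b | e a b]| + #|U|.
Proof.
by rewrite card_sum_preimset -cardsT; congr (_ + _); apply: eq_card => ?; rewrite !inE.
Qed.

Lemma card_join_nbhd_inr b : #|[set y | J (inr b) y]| = #|T| + #|[set c | f b c]|.
Proof.
by rewrite card_sum_preimset -cardsT; congr (_ + _); apply: eq_card => ?; rewrite !inE.
Qed.

End Join.

Lemma path_rel_irreflexive m : irreflexive (@path_rel m).
Proof. by move=> p; rewrite /path_rel !gtn_eqF. Qed.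

Lemma card_path_nbhd_gt0 m (p : 'I_m) : 1 < m -> 0 < #|[set q | path_rel p q]|.
Proof.
move=> m_gt1; apply/card_gt0P.
have [p_lt|p_ge] := ltnP p.+1 m.
  by exists (Ordinal p_lt); rewrite inE /path_rel eqxx.
have p_gt0 : 0 < val p by rewrite -ltnS (leq_trans m_gt1 p_ge).
exists (Ordinal (leq_ltn_trans (leq_pred p) (ltn_ord p))).
by rewrite inE /path_rel /= prednK ?eqxx ?orbT.
Qed.

Section JoinPath.
Variables (T : finType) (e : rel T) (m : nat).
Local Notation J := (join_rel e (@path_rel m)).

Let prefix (i : nat) := [set x : T + 'I_m | if x is inr p then p <= i else true].

Lemma zero_forcing_set_join_path_prefix j i : i + j.+1 = m -> zero_forcing_set J (prefix i).
Proof.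
elim: j i => [|j IHj] i m_eq.
  exists [::]; apply/eqP/setP => -[a|p]; rewrite !inE //.
  by rewrite -ltnS -(addn1 i) m_eq ltn_ord.
have i_lt : i < m by rewrite -m_eq addnS ltnS leq_addr.
have Si_lt : i.+1 < m by rewrite -m_eq !addnS !ltnS leq_addr.
apply: (@zero_forcing_set_force _ _ _ (inr (Ordinal i_lt)) (inr (Ordinal Si_lt))).
  apply/and4P; split; rewrite ?inE /= ?ltnn ?leqnn //; first by rewrite /path_rel eqxx.
  apply/forallP => -[a|q]; rewrite /= ?inE ?orbT //; apply/implyP.
  case/orP => /eqP /= q_eq; last by rewrite -[X in q <= X]q_eq leqnSn orbT.
  by rewrite (_ : q = Ordinal Si_lt) ?eqxx //; apply: val_inj.
have -> : inr (Ordinal Si_lt) |: prefix i = prefix i.+1.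
  by apply/setP => -[a|p]; rewrite !inE //= [RHS]leq_eqVlt ltnS.
by apply: IHj; rewrite addSnnS.
Qed.

Lemma zero_forcing_number_join_path_le : 0 < m -> zero_forcing_number J <= #|T|.+1.
Proof.
move=> m_gt0; have -> : #|T|.+1 = #|prefix 0|.
  rewrite card_sum_preimset -addn1 -cardsT -(cards1 (Ordinal m_gt0)).
  by congr (_ + _); apply: eq_card => ?; rewrite !inE ?leqn0 -?val_eqE.
apply/zero_forcing_number_min/(zero_forcing_set_join_path_prefix (j := m.-1)).
by rewrite add0n prednK.
Qed.

Lemma zero_forcing_number_join_path : irreflexive e ->
  (forall a, 0 < #|[set b | e a b]|) -> 1 < m -> #|T| <= m ->
  zero_forcing_number J = #|T|.+1.
Proof.
move=> irr_e e_nbhd m_gt1 T_le_m; have m_gt0 := ltnW m_gt1.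
apply/eqP; rewrite eqn_leq zero_forcing_number_join_path_le //=.
apply: zero_forcing_number_ge_mindeg.
- exact/join_irreflexive/path_rel_irreflexive.
- by rewrite card_sum card_ord addn_gt0 m_gt0 orbT.
case=> [a|p]; rewrite ?card_join_nbhd_inl ?card_join_nbhd_inr.
  by rewrite card_ord addnC -addn1 leq_add.
by rewrite -addn1 leq_add2l card_path_nbhd_gt0.
Qed.

End JoinPath.

Lemma connected_nbhd_gt0 (T : finType) (e : rel T) :
  connected_graph e -> 1 < #|T| -> forall x, 0 < #|[set y | e x y]|.
Proof.
move=> conn T_gt1 x; have [y] : exists y, y \in [set~ x].
  by apply/set0Pn; rewrite -card_gt0 cardsC1 -subn1 subn_gt0.
rewrite !inE => yx; case/connectP: (conn x y) => -[|z p] /=.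
  by move=> _ y_eq; rewrite y_eq eqxx in yx.
by case/andP=> exz _ _; apply/card_gt0P; exists z; rewrite inE.
Qed.

Section Spectra.
Import GRing.Theory Num.Theory.
Local Open Scope ring_scope.

Lemma char_poly_similar (R : idomainType) n (A B Q : 'M[R]_n) :
  Q *m A = B *m Q -> \det Q != 0 -> char_poly A = char_poly B.
Proof.
move=> QA_BQ detQ_neq0.
have : map_mx polyC Q *m char_poly_mx A = char_poly_mx B *m map_mx polyC Q.
  by rewrite /char_poly_mx mulmxBr mulmxBl -!map_mxM QA_BQ scalar_mxC.
move/(congr1 determinant); rewrite !det_mulmx det_map_mx [RHS]mulrC.
by apply: mulfI; rewrite polyC_eq0.
Qed.

Lemma char_poly_perm (R : idomainType) n (s : 'S_n) (A : 'M[R]_n) :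
  char_poly (row_perm s (col_perm s A)) = char_poly A.
Proof.
apply: (char_poly_similar (Q := perm_mx s^-1)); last by rewrite det_perm signr_eq0.
by rewrite row_permE col_permE !mulmxA -perm_mxM mulVg perm_mx1 mul1mx.
Qed.

Lemma cospectral_iso (T U : finType) (e : rel T) (f : rel U) (g : T -> U) :
  bijective g -> (forall x y, f (g x) (g y) = e x y) -> cospectral e f.
Proof.
move=> g_bij f_g; rewrite /cospectral; have E : #|T| = #|U| := bij_eq_card g_bij.
have -> : char_poly (adjacency e) = char_poly (castmx (E, E) (adjacency e)).
  by case: _ / E.
have s_inj : injective (enum_rank \o g \o enum_val \o cast_ord (esym E)).
  exact/inj_comp/cast_ord_inj/inj_comp/enum_val_inj/inj_comp/(bij_inj g_bij)/enum_rank_inj.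
rewrite -[RHS](char_poly_perm (perm s_inj)); congr char_poly.
by apply/matrixP => i j; rewrite castmxE !mxE !permE /= !enum_rankK f_g.
Qed.

Section Switching.
Variables (R : idomainType) (n : nat) (X Y : 'M[R]_n) (v w : 'cV[R]_n) (k c : R).
Hypotheses (c_neq0 : c != 0) (vv : v^T *m v = (c *+ 2)%:M).
Hypotheses (vX : v^T *m X = k *: v^T + c *: w^T) (Yv : Y *m v = k *: v - c *: w).
Hypothesis XY : X - Y = v *m w^T + w *m v^T.

Let Q := c%:M - v *m v^T.

Let QX_YQ : Q *m X = Y *m Q.
Proof.
rewrite /Q mulmxBl mulmxBr mul_scalar_mx mul_mx_scalar -mulmxA vX mulmxA Yv.
rewrite mulmxDr mulmxBl -!scalemxAr -!scalemxAl.
apply/matrixP => i j; move/matrixP/(_ i j): XY; rewrite !mxE => XYij.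
rewrite -[X i j](subrK (Y i j)) XYij; ring.
Qed.

Let QQ : Q *m Q = (c ^+ 2)%:M.
Proof.
rewrite /Q mulmxBl !mulmxBr -scalar_mxM mul_scalar_mx mul_mx_scalar.
rewrite -mulmxA [v^T *m _]mulmxA vv mul_scalar_mx -scalemxAr.
apply/matrixP => i j; rewrite !mxE; ring.
Qed.

Lemma char_poly_switching : char_poly X = char_poly Y.
Proof.
apply: (char_poly_similar QX_YQ); apply: contraNneq (expf_neq0 n (expf_neq0 2 c_neq0)).
by move/(congr1 (fun d => d * d)); rewrite -det_mulmx QQ det_scalar mul0r => <-.
Qed.

End Switching.

Lemma sum_adj_row (T : finType) (e : rel T) x :
  \sum_y (e x y)%:R = #|[set y | e x y]|%:R :> int.
Proof.
rewrite -natr_sum -sum1_card [in RHS]big_mkcond /=.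
by congr _%:R; apply: eq_bigr => y _; rewrite inE; case: (e x y).
Qed.

Lemma sum_adj_col (T : finType) (e : rel T) y : symmetric e ->
  \sum_x (e x y)%:R = #|[set x | e y x]|%:R :> int.
Proof. by move=> sym_e; under eq_bigr do rewrite sym_e; apply: sum_adj_row. Qed.

Lemma sum_enum_val (T : finType) (F : T -> int) :
  \sum_(i < #|T|) F (enum_val i) = \sum_x F x.
Proof. by rewrite -big_enum_val. Qed.

Definition swap_outer (A B C : Type) (x : (A + B) + C) : (C + B) + A :=
  match x with inl (inl a) => inr a | inl (inr b) => inl (inr b) | inr c => inl (inl c) end.

Lemma swap_outerK (A B C : Type) : cancel (@swap_outer A B C) (@swap_outer C B A).
Proof. by case=> [[]|]. Qed.

Section Construction.
Variables (T1 T2 : finType) (e1 : rel T1) (e2 : rel T2) (n k m : nat).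
Hypotheses (sym1 : symmetric e1) (sym2 : symmetric e2).
Hypotheses (reg1 : k_regular e1 k) (reg2 : k_regular e2 k).
Hypotheses (card1 : #|T1| = n) (card2 : #|T2| = n) (n_gt0 : (0 < n)%N).

Local Notation V := ((T1 + 'I_m) + T2)%type.
Local Notation G' := (dunion_rel (join_rel e1 (@path_rel m)) e2).
Local Notation G'' := (dunion_rel (join_rel e2 (@path_rel m)) e1).

(* [G''] carried over to the vertex order (G_1, P_m, G_2) of [G']. *)
Let Y : rel V := fun x y => G'' (swap_outer x) (swap_outer y).

Let side (x : V) : int :=
  match x with inl (inl _) => 1 | inl (inr _) => 0 | inr _ => -1 end.
Let on_path (x : V) : int := if x is inl (inr _) then 1 else 0.

Let side_adj b : \sum_z side z * (G' z b)%:R = k%:R * side b + n%:R * on_path b.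
Proof.
rewrite !big_sumType /=.
case: b => [[b|q]|d] /=; rewrite -!mulr_sumr ?big1_eq ?mul1r ?mul0r ?mulN1r ?mulr0 ?mulr1
  ?addr0 ?add0r ?sum_adj_col ?reg1 ?reg2 ?sumr_const ?mulrN1 ?card1 //.
Qed.

Let adj_side a : \sum_z (Y a z)%:R * side z = k%:R * side a - n%:R * on_path a.
Proof.
rewrite !big_sumType /= /Y.
case: a => [[a|q]|d] /=; rewrite -!mulr_suml ?big1_eq ?mulr1 ?mulr0 ?mul1r ?mul0r ?mulrN1
  ?subr0 ?addr0 ?add0r ?sum_adj_row ?reg1 ?reg2 ?sumr_const ?card2 //.
Qed.

Let adj_diff a b : (G' a b)%:R - (Y a b)%:R = side a * on_path b + on_path a * side b.
Proof. by case: a => [[a|p]|c]; case: b => [[b|q]|d]; rewrite /= ?subrr. Qed.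

Let side_norm : \sum_z side z * side z = n%:R *+ 2.
Proof.
rewrite !big_sumType /= big1_eq addr0.
under eq_bigr do rewrite mul1r.
under [X in _ + X]eq_bigr do rewrite mulrNN mul1r.
by rewrite !sumr_const card1 card2 mulr2n.
Qed.

Lemma cospectral_construction : cospectral G' G''.
Proof.
pose col (u : V -> int) : 'cV_#|{: V}| := \col_i u (enum_val i).
have Y_G'' : cospectral Y G''.
  apply: (cospectral_iso (g := @swap_outer _ _ _)) => //.
  by exists (@swap_outer _ _ _); apply: swap_outerK.
rewrite /cospectral -Y_G''.
apply: (char_poly_switching (v := col side) (w := col on_path) (k := k%:R) (c := n%:R)).
- by rewrite pnatr_eq0 -lt0n n_gt0.
- apply/matrixP => i j; rewrite !ord1 !mxE mulr1n.
  by under eq_bigr do rewrite !mxE; rewrite -side_norm; exact: sum_enum_val.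
- apply/matrixP => i j; rewrite !mxE.
  by under eq_bigr do rewrite !mxE; rewrite -side_adj; exact: sum_enum_val.
- apply/matrixP => i j; rewrite !mxE.
  by under eq_bigr do rewrite !mxE; rewrite -adj_side; exact: sum_enum_val.
- by apply/matrixP => i j; rewrite !mxE !big_ord1 !mxE adj_diff.
Qed.

End Construction.

End Spectra.

Theorem theorem5p1 (T1 T2 : finType) (e1 : rel T1) (e2 : rel T2) (n k m : nat) :
  simple_graph e1 -> simple_graph e2 ->
  connected_graph e1 -> connected_graph e2 ->
  k_regular e1 k -> k_regular e2 k ->
  #|T1| = n -> #|T2| = n ->
  zero_forcing_number e1 <> zero_forcing_number e2 ->
  n <= m ->
  let G' := dunion_rel (join_rel e1 (@path_rel m)) e2 in
  let G'' := dunion_rel (join_rel e2 (@path_rel m)) e1 in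
  [/\ ~ isomorphic G' G'', cospectral G' G'' &
      zero_forcing_number G' <> zero_forcing_number G''].
Proof.
move=> [sym1 irr1] [sym2 irr2] conn1 conn2 reg1 reg2 card1 card2 Z12 n_le_m G' G''.
have n_gt1 : 1 < n.
  rewrite ltnNge; apply/negP => n_le1; apply: Z12.
  by rewrite !zero_forcing_number_small ?card1 ?card2.
have m_gt1 : 1 < m := leq_trans n_gt1 n_le_m.
have ZG' : zero_forcing_number G' = n.+1 + zero_forcing_number e2.
  rewrite zero_forcing_number_dunion zero_forcing_number_join_path ?card1 //.
  by apply: connected_nbhd_gt0; rewrite ?card1.
have ZG'' : zero_forcing_number G'' = n.+1 + zero_forcing_number e1.
  rewrite zero_forcing_number_dunion zero_forcing_number_join_path ?card2 //.
  by apply: connected_nbhd_gt0; rewrite ?card2.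
have ZG'_neq : zero_forcing_number G' <> zero_forcing_number G''.
  by rewrite ZG' ZG'' => /addnI /esym.
split=> //; first by move/zero_forcing_number_iso.
exact: cospectral_construction (ltnW n_gt1).
Qed.
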